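(* In the infinite-color urn model with parameters $\ell,s$ and initial cumulative counts $m_1,\dots,m_s$, let $k\ge s$, $p=k-s+1$, and $n\ge \ell p$. Then $$M_k(n)\sim \mathrm{Pimm}_\ell\big(1,\;m_s+\ell p+(k-s),\;n-\ell p\big).$$ Furthermore, conditionally on $M_{k+1}(n)$, $$M_k(n)\sim\begin{cases}\mathrm{Pclas}\big(m_{k+1}-m_k,\;m_k,\;M_{k+1}(n)-m_{k+1}\big)&\text{if }1\le k<s,\\ \mathrm{Pclas}\big(1,\;m_s+\ell p+(k-s),\;M_{k+1}(n)-m_s-(\ell+1)p\big)&\text{if }k\ge s\ (\text{and } n\ge\ell p).\end{cases}$$
   Context: Infinite-color urn model: at time $0$ the urn contains balls of colors $1,\dots,s$ (at least one of each). Fix an integer $\ell\ge1$. At the $n$th step a ball is drawn uniformly at random and returned with one additional ball of the same color; if $n$ is a multiple of $\ell$, one ball of the new color $s+n/\ell$ is added after the $n$th draw. $M_k(n)$ is the number of balls with colors in $\{1,\dots,k\}$ after step $n$ is completed, and $m_k=M_k(0)$ (with $m_1\ge1$, $m_{k+1}-m_k\ge1$ for $k<s$). $\mathrm{Pclas}(b,w,m)$ denotes the distribution of the number of white balls in a classical Pólya urn (draw a uniformly random ball, return it with one more of the same color) after $m$ draws, starting with $b$ black and $w$ white balls. $\mathrm{Pimm}_\ell(b,w,m)$ denotes the distribution of the number of white balls after $m$ steps of the following urn started with $b$ black and $w$ white balls: at step $j$ a uniformly random ball is drawn and returned with one more of the same color, and if $j$ is a multiple of $\ell$ a black ball is added after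 this draw. *)

From HB Require Import structures.
From mathcomp Require Import all_boot all_order all_algebra.
Set Implicit Arguments. Unset Strict Implicit. Unset Printing Implicit Defensive.
Import Order.TTheory GRing.Theory Num.Theory.
Local Open Scope ring_scope.

(* A state of the infinite-color urn: the list of ball counts of colors 1,2,...
   (color i+1 at index i). *)

(* Initial state built from the cumulative counts m_1..m_s (m_0 := 0). *)
Definition urn_init (m : nat -> nat) (s : nat) : seq nat :=
  mkseq (fun i => (m i.+1 - (if i == 0%N then 0 else m i))%N) s.

(* State after the draw at step t+1 picked color i+1: add one ball of that color,
   and if t+1 is a multiple of l, add one ball of a new color. *)
Definition urn_next (l t : nat) (st : seq nat) (i : nat) : seq nat :=
  let st' := incr_nth st i in if (l %| t.+1)%N then rcons st' 1%N else st'.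

(* urnE l t n st f = expectation of f(state after n further steps), starting from
   state st after t steps have been completed. *)
Fixpoint urnE (l t n : nat) (st : seq nat) (f : seq nat -> rat) : rat :=
  match n with
  | 0%N => f st
  | n'.+1 => \sum_(i < size st)
        ((nth 0%N st i)%:R / (sumn st)%:R) * urnE l t.+1 n' (urn_next l t st i) f
  end.

Definition urnP (l : nat) (m : nat -> nat) (s n : nat) (P : pred (seq nat)) : rat :=
  urnE l 0 n (urn_init m s) (fun st => (P st)%:R).

Definition Mk (k : nat) (st : seq nat) : nat := sumn (take k st).

(* Pclas(b,w,m): probability that the classical Polya urn started with b black and
   w white balls has a white balls after m draws. *)
Fixpoint pclas (b w m a : nat) : rat :=
  match m with
  | 0%N => (w == a)%:R
  | m'.+1 => (w%:R / (b + w)%:R) * pclas b w.+1 m' a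
             + (b%:R / (b + w)%:R) * pclas b.+1 w m' a
  end.

(* Immigration urn: j = number of steps already performed; after step j+1,
   if l divides j+1, one black ball is added. *)
Fixpoint pimm_aux (l j b w m a : nat) : rat :=
  match m with
  | 0%N => (w == a)%:R
  | m'.+1 =>
      let e := if (l %| j.+1)%N then 1%N else 0%N in
      (w%:R / (b + w)%:R) * pimm_aux l j.+1 (b + e) w.+1 m' a
      + (b%:R / (b + w)%:R) * pimm_aux l j.+1 (b.+1 + e) w m' a
  end.

Definition pimm (l b w m a : nat) : rat := pimm_aux l 0 b w m a.

From mathcomp Require Import all_boot all_order all_algebra.
From mathcomp Require Import zify ring.
Import GRing.Theory Num.Theory.
Local Open Scope ring_scope.

(** The urn is only ever observed through three numbers: the balls of colors in
  {1..k1}, in {k1+1..k2}, and all the others.  Since a draw picks a ball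
  uniformly, these three groups evolve exactly like a three-color urn
  ([tri_urn]) in which a ball of the third group is added at every multiple
  of l ([urnE_tri_urn]).  In that three-color urn, (i) merging the first two
  groups gives an immigration urn ([tri_urn_lump]), and (ii) the number of
  balls of the first group, given the size of the first two groups, follows
  the classical Pólya law ([tri_urn_cond]), because conditionally on drawing
  from the first two groups they behave as a classical Pólya urn.  For
  k >= s, at time l*p with p = k-s+1 the colors 1..k+1 already exist, color
  k+1 holds a single ball and M_k is deterministic ([state_at_lp]); restarting
  the urn at that time ([urnP_restart]) yields the statements for k >= s,
  while for k < s we apply [urnE_cond] at time 0. *)

Lemma Mk_sum_nth (st : seq nat) k :
  Mk k st = (\sum_(0 <= i < k) nth 0%N st i)%N.
Proof.
rewrite /Mk; elim: st k => [|x st IH] k.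
  by rewrite big1_seq //= => i _; rewrite nth_nil.
case: k => [|k]; first by rewrite big_geq.
by rewrite big_nat_recl //= IH.
Qed.

Lemma Mk0 (st : seq nat) : Mk 0 st = 0%N.
Proof. by rewrite /Mk take0. Qed.

Lemma Mk_size (st : seq nat) : Mk (size st) st = sumn st.
Proof. by rewrite /Mk take_size. Qed.

Lemma sum_nth_range (st : seq nat) a b : (a <= b)%N ->
  (\sum_(a <= i < b) nth 0%N st i)%N = (Mk b st - Mk a st)%N.
Proof.
by move=> hab; rewrite !Mk_sum_nth (@big_cat_nat _ _ _ a 0 b) //= addKn.
Qed.

Lemma Mk_mono k1 k2 st : (k1 <= k2)%N -> (Mk k1 st <= Mk k2 st)%N.
Proof.
by move=> h; rewrite !Mk_sum_nth (@big_cat_nat _ _ _ k1 0 k2) //= leq_addr.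
Qed.

Lemma Mk_incr_nth (st : seq nat) i k : (i < size st)%N ->
  Mk k (incr_nth st i) = (Mk k st + (i < k))%N.
Proof.
rewrite /Mk; elim: st i k => [|x st IH] i k //= hi.
case: k => [|k]; first by case: i hi => [|i] //=; rewrite addn0.
case: i hi => [|i] hi /=; first lia.
rewrite IH //; lia.
Qed.

Lemma Mk_rcons k x st : (k <= size st)%N -> Mk k (rcons st x) = Mk k st.
Proof. by move=> h; rewrite /Mk -cats1 takel_cat. Qed.

Lemma sumn_rcons st x : sumn (rcons st x) = (sumn st + x)%N.
Proof. by rewrite -cats1 sumn_cat /= addn0. Qed.

Lemma size_urn_next l t st i : (i < size st)%N ->
  size (urn_next l t st i) = (size st + (l %| t.+1))%N.
Proof.
move=> hi; rewrite /urn_next.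
by case: ifP => _; rewrite ?size_rcons size_incr_nth hi ?addn1 ?addn0.
Qed.

Lemma Mk_urn_next l t st i k : (i < size st)%N -> (k <= size st)%N ->
  Mk k (urn_next l t st i) = (Mk k st + (i < k))%N.
Proof.
move=> hi hk; rewrite /urn_next -Mk_incr_nth //; case: ifP => // _.
by rewrite Mk_rcons // size_incr_nth hi.
Qed.

Lemma sumn_urn_next l t st i : (i < size st)%N ->
  sumn (urn_next l t st i) = (sumn st + 1 + (if l %| t.+1 then 1 else 0))%N.
Proof.
move=> hi; have hsum : sumn (incr_nth st i) = (sumn st + 1)%N.
  rewrite -Mk_size -[sumn st]Mk_size size_incr_nth hi Mk_incr_nth //.
  by rewrite Mk_size hi.
rewrite /urn_next; case: ifP => _; rewrite ?sumn_rcons hsum //; lia.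
Qed.

Lemma urnE_split l t a b st f :
  urnE l t (a + b) st f = urnE l t a st (fun st' => urnE l (t + a) b st' f).
Proof.
elim: a t st => [|a IH] t st /=; first by rewrite addn0.
by apply: eq_bigr => i _; rewrite IH addSnnS.
Qed.

Lemma urnE_eq_inv l (Inv : nat -> seq nat -> Prop)
  (Inv_step : forall t st i, Inv t st -> (i < size st)%N ->
      Inv t.+1 (urn_next l t st i)) n t st f g :
  Inv t st -> (forall st', Inv (t + n)%N st' -> f st' = g st') ->
  urnE l t n st f = urnE l t n st g.
Proof.
elim: n t st => [|n IH] t st hI hfg /=; first by apply: hfg; rewrite addn0.
apply: eq_bigr => i _; congr (_ * _); apply: IH; first exact: Inv_step.
by move=> st' h; apply: hfg; rewrite -addSnnS.
Qed.

Lemma urnE_ext l n t st f g : f =1 g -> urnE l t n st f = urnE l t n st g.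
Proof. by move=> h; apply: (@urnE_eq_inv l (fun _ _ => True)) => // ? _. Qed.

(** The transition probabilities sum to one. *)
Lemma urnE_const l n t st c : (0 < sumn st)%N -> urnE l t n st (fun _ => c) = c.
Proof.
elim: n t st => [|n IH] t st hs //=.
under eq_bigr => i _ do rewrite IH ?sumn_urn_next ?addn1 //.
rewrite -big_distrl -mulr_suml /= -natr_sum.
rewrite -(big_mkord xpredT) -Mk_sum_nth Mk_size divff ?mul1r //.
by rewrite pnatr_eq0 -lt0n.
Qed.

Lemma urnE_mulr l n t st f c :
  urnE l t n st (fun x => f x * c) = urnE l t n st f * c.
Proof.
elim: n t st => [|n IH] t st //=.
by rewrite big_distrl; apply: eq_bigr => i _; rewrite IH mulrA.
Qed.

(** ** Two auxiliary urns *)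

Fixpoint imm_urn (l j b w n : nat) (F : nat -> nat -> rat) : rat :=
  match n with
  | 0%N => F b w
  | n'.+1 =>
      let e := if (l %| j.+1)%N then 1%N else 0%N in
      (w%:R / (b + w)%:R) * imm_urn l j.+1 (b + e) w.+1 n' F
      + (b%:R / (b + w)%:R) * imm_urn l j.+1 (b.+1 + e) w n' F
  end.

Fixpoint tri_urn (l j W B R n : nat) (F : nat -> nat -> nat -> rat) : rat :=
  match n with
  | 0%N => F W B R
  | n'.+1 =>
      let e := if (l %| j.+1)%N then 1%N else 0%N in
      let S := (W + B + R)%N in
      (W%:R / S%:R) * tri_urn l j.+1 W.+1 B (R + e) n' F
      + (B%:R / S%:R) * tri_urn l j.+1 W B.+1 (R + e) n' F
      + (R%:R / S%:R) * tri_urn l j.+1 W B (R.+1 + e) n' F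
  end.

Lemma pimm_aux_imm_urn l j b w n a :
  pimm_aux l j b w n a = imm_urn l j b w n (fun _ w => (w == a)%:R).
Proof. by elim: n j b w => [|n IH] j b w //=; rewrite !IH. Qed.

Lemma imm_urn_shift l j b w n F : imm_urn l (j + l) b w n F = imm_urn l j b w n F.
Proof.
elim: n j b w => [|n IH] j b w //=.
have -> : (l %| (j + l).+1)%N = (l %| j.+1)%N by rewrite -addSn dvdn_addl.
by rewrite -!addSn !IH.
Qed.

Lemma imm_urn_shift_mul l p b w n F : imm_urn l (l * p) b w n F = imm_urn l 0 b w n F.
Proof.
elim: p => [|p IH]; first by rewrite muln0.
by rewrite mulnS addnC imm_urn_shift.
Qed.

Lemma tri_urn_lump l n j W B R G :
  tri_urn l j W B R n (fun w b r => G (w + b)%N r)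
  = imm_urn l j R (W + B) n (fun r c => G c r).
Proof.
elim: n j W B R => [|n IH] j W B R //=.
rewrite !IH addSn addnS.
set X := imm_urn _ _ _ _ _ _; set Y := imm_urn _ _ _ _ _ _.
rewrite [(R + _)%N]addnC natrD; ring.
Qed.

(** The white balls never decrease, so a white count below the initial one
    has probability zero. *)
Lemma imm_urn_unreachable l c n j R w : (c < w)%N ->
  imm_urn l j R w n (fun _ x => (x == c)%:R) = 0.
Proof.
elim: n j R w => [|n IH] j R w h /=.
  by case: eqP => // ?; subst; rewrite ltnn in h.
by rewrite !IH ?mulr0 ?addr0 // ltnW.
Qed.

(** Drawing white (probability W/S) then continuing, or drawing black, both
    followed by a common factor Q: conditioning on the draw being white or
    black replaces W/S, B/S by W/(W+B), B/(W+B). *)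
Lemma draw_given_white_or_black (W B S Q P1 P2 : rat) : W + B != 0 ->
  W / S * Q * P1 + B / S * Q * P2
  = (W / S * Q + B / S * Q) * (W / (B + W) * P1 + B / (B + W) * P2).
Proof.
move=> hWB; have [->|hS] := eqVneq S 0; first by rewrite invr0 !mulr0 !mul0r addr0.
by rewrite [B + W]addrC; field; rewrite hWB hS.
Qed.

(** In the three-color urn, given that white and black balls number c in the
    end, the white ones follow the classical Pólya law started from B black
    and W white balls, run for the c - (W + B) draws that hit white or black. *)
Lemma tri_urn_cond l a c n j W B R :
  tri_urn l j W B R n (fun w b _ => ((w == a) && ((w + b)%N == c))%:R)
  = tri_urn l j W B R n (fun w b _ => ((w + b)%N == c)%:R) * pclas B W (c - (W + B)) a.
Proof.
elim: n j W B R => [|n IH] j W B R /=.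
  have [<-|ne] := eqVneq (W + B)%N c; last by rewrite andbF mul0r.
  by rewrite subnn /= andbT mul1r.
rewrite !IH !(tri_urn_lump _ _ _ _ _ _ (fun x _ => (x == c)%:R)) /= addSn addnS.
set e := (if _ then _ else _).
set Q := imm_urn _ _ _ (W + B).+1 _ _.
have [hc|hc] := leqP c (W + B).
  rewrite [Q]imm_urn_unreachable // !mul0r !mulr0 !add0r; ring.
have -> : (c - (W + B))%N = (c - (W + B).+1).+1 by lia.
rewrite [pclas B W _ _]/=.
set P1 := pclas _ _ _ _; set P2 := pclas _ _ _ _.
have [hz|hz] := eqVneq (W + B)%N 0%N.
  have [-> ->] : W = 0%N /\ B = 0%N by lia.
  rewrite !mul0r; ring.
have hWB : W%:R + B%:R != 0 :> rat by rewrite -natrD pnatr_eq0.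
have := draw_given_white_or_black W%:R B%:R (W + B + R)%:R Q P1 P2 hWB.
by rewrite !natrD => H; rewrite mulrDl -H; ring.
Qed.

(** ** The urn seen through three groups of colors *)

Lemma sum_draw_const (st : seq nat) (S a b : nat) (c : nat -> rat) (V : rat) :
  (forall i, (a <= i < b)%N -> c i = V) ->
  \sum_(a <= i < b) (nth 0%N st i)%:R / S%:R * c i
  = (\sum_(a <= i < b) nth 0%N st i)%N%:R / S%:R * V.
Proof.
move=> hc; rewrite (eq_big_nat _ _ (F2 := fun i => (nth 0%N st i)%:R / S%:R * V));
  last by move=> i /hc ->.
by rewrite -big_distrl -mulr_suml natr_sum.
Qed.

Lemma sum_draw_three_groups (st : seq nat) k1 k2 (S : nat) (X Y Z : rat) :
  (k1 <= k2)%N -> (k2 <= size st)%N ->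
  \sum_(0 <= i < size st)
      (nth 0%N st i)%:R / S%:R * (if (i < k1)%N then X else if (i < k2)%N then Y else Z)
  = (Mk k1 st)%:R / S%:R * X + (Mk k2 st - Mk k1 st)%N%:R / S%:R * Y
    + (sumn st - Mk k2 st)%N%:R / S%:R * Z.
Proof.
move=> h12 h2.
rewrite (@big_cat_nat _ _ _ k2 0 (size st)) //= (@big_cat_nat _ _ _ k1 0 k2) //=.
rewrite (@sum_draw_const _ _ 0 k1 _ X); last by move=> i /andP[_ ->].
rewrite (@sum_draw_const _ _ k1 k2 _ Y); last first.
  by move=> i /andP[h1 h1']; rewrite ltnNge h1 h1'.
rewrite (@sum_draw_const _ _ k2 (size st) _ Z); last first.
  by move=> i /andP[h1 _]; rewrite !ltnNge h1 (leq_trans h12 h1).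
by rewrite !sum_nth_range // Mk0 subn0 Mk_size.
Qed.

(** Projection: a payoff that depends on a final state only through the
    sizes of the three groups of colors {1..k1}, {k1+1..k2}, {k2+1..} is
    computed by the three-color urn started from the current group sizes
    (newly created colors join the third group). *)
Lemma urnE_tri_urn l n t st k1 k2 F : (k1 <= k2)%N -> (k2 <= size st)%N ->
  urnE l t n st (fun x => F (Mk k1 x) (Mk k2 x - Mk k1 x)%N (sumn x - Mk k2 x)%N)
  = tri_urn l t (Mk k1 st) (Mk k2 st - Mk k1 st) (sumn st - Mk k2 st) n F.
Proof.
move=> h12; elim: n t st => [|n IH] t st h2 //=.
set W := Mk k1 st; set C := Mk k2 st; set S := sumn st.
set e := (if _ then _ else _).
have hWC : (W <= C)%N by apply: Mk_mono.
have hCS : (C <= S)%N by rewrite /S -Mk_size Mk_mono.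
pose H (x y : bool) :=
  tri_urn l t.+1 (W + x) (C + y - (W + x)) (S.+1 + e - (C + y)) n F.
transitivity (\sum_(0 <= i < size st) (nth 0%N st i)%:R / S%:R *
    (if (i < k1)%N then H true true else if (i < k2)%N then H false true
     else H false false)).
  rewrite big_mkord; apply: eq_bigr => i _; have hi := ltn_ord i.
  rewrite IH; last by rewrite size_urn_next //; lia.
  rewrite !Mk_urn_next ?sumn_urn_next ?(leq_trans h12) // -/e -/W -/C -/S addn1.
  by case: (ltnP i k1) => h1; [rewrite (leq_trans h1 h12) | case: ltnP].
rewrite sum_draw_three_groups // -/W -/C -/S /H /=.
have -> : (W + (C - W) + (S - C))%N = S by lia.
have -> : (C + 1 - (W + 1))%N = (C - W)%N by lia.
have -> : (S.+1 + e - (C + 1))%N = (S - C + e)%N by lia.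
have -> : (C + 1 - (W + 0))%N = (C - W).+1%N by lia.
have -> : (S.+1 + e - (C + 0))%N = ((S - C).+1 + e)%N by lia.
by rewrite !addn0 !addn1.
Qed.

(** ** Laws of M_k from an arbitrary state *)

(** M_k evolves as an immigration urn: white balls are the colors 1..k,
    black balls all the others (including every newly created color). *)
Lemma urnE_marginal l n t st k a : (k <= size st)%N ->
  urnE l t n st (fun x => (Mk k x == a)%:R)
  = imm_urn l t (sumn st - Mk k st) (Mk k st) n (fun _ w => (w == a)%:R).
Proof.
move=> hk.
have := urnE_tri_urn l n t st k k (fun w b _ => ((w + b)%N == a)%:R) (leqnn k) hk.
rewrite subnn (tri_urn_lump _ _ _ _ _ _ (fun c _ => (c == a)%:R)) addn0 => <-.
by apply: urnE_ext => x; rewrite subnn addn0.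
Qed.

Lemma urnE_two_counts l n t st k (G : nat -> nat -> rat) : (k < size st)%N ->
  urnE l t n st (fun x => G (Mk k x) (Mk k.+1 x))
  = tri_urn l t (Mk k st) (Mk k.+1 st - Mk k st) (sumn st - Mk k.+1 st) n
      (fun w c _ => G w (w + c)%N).
Proof.
move=> hk; rewrite -urnE_tri_urn //; apply: urnE_ext => x.
by rewrite subnKC // Mk_mono.
Qed.

Lemma urnE_cond l n t st k a b : (k < size st)%N ->
  urnE l t n st (fun x => ((Mk k x == a) && (Mk k.+1 x == b))%:R)
  = urnE l t n st (fun x => (Mk k.+1 x == b)%:R)
    * pclas (Mk k.+1 st - Mk k st) (Mk k st) (b - Mk k.+1 st) a.
Proof.
move=> hk.
rewrite (urnE_two_counts _ _ _ _ k (fun w c => ((w == a) && (c == b))%:R)) //.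
rewrite (urnE_two_counts _ _ _ _ k (fun _ c => (c == b)%:R)) //.
by rewrite tri_urn_cond subnKC // Mk_mono.
Qed.

Section InitialUrn.

Context {l s : nat} {m : nat -> nat}.

Definition init_increasing : Prop :=
  forall k : nat, (1 <= k)%N -> (k < s)%N -> (m k < m k.+1)%N.

Lemma Mk_init (hm : init_increasing) k :
  (1 <= k)%N -> (k <= s)%N -> Mk k (urn_init m s) = m k.
Proof.
rewrite Mk_sum_nth; elim: k => [|k IH] // _ hk.
rewrite big_nat_recr //= nth_mkseq //.
case: k IH hk => [|k] IH hk; first by rewrite big_geq /=; lia.
by rewrite IH ?(ltnW hk) //=; have := hm k.+1 erefl hk; lia.
Qed.

Lemma sumn_init (hs : (1 <= s)%N) (hm : init_increasing) :
  sumn (urn_init m s) = m s.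
Proof. by rewrite -(Mk_init hm s hs (leqnn s)) /Mk take_oversize // size_mkseq. Qed.

(** The urn is never empty. *)
Lemma m_pos (hm1 : (1 <= m 1%N)%N) (hm : init_increasing) k :
  (1 <= k)%N -> (k <= s)%N -> (0 < m k)%N.
Proof.
elim: k => [|[|k] IH] // _ hk.
by have := hm k.+1 erefl hk; have := IH erefl (ltnW hk); lia.
Qed.

(** Invariant of the dynamics after t steps: the number of colors and of
    balls are known, and a color has just been created when l divides t. *)
Definition urn_inv (t : nat) (st : seq nat) : Prop :=
  [/\ size st = (s + t %/ l)%N, sumn st = (m s + t + t %/ l)%N
    & (0 < t)%N -> (l %| t)%N -> exists st', st = rcons st' 1%N].

Lemma urn_inv_next (hl : (1 <= l)%N) t st i :
  urn_inv t st -> (i < size st)%N -> urn_inv t.+1 (urn_next l t st i).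
Proof.
move=> [hsize hsum _] hi; split.
- by rewrite size_urn_next // hsize divnS //; lia.
- by rewrite sumn_urn_next // hsum divnS //; case: (l %| t.+1)%N; lia.
- by move=> _ hd; rewrite /urn_next hd; eexists.
Qed.

Lemma urn_inv_init (hs : (1 <= s)%N) (hm : init_increasing) :
  urn_inv 0 (urn_init m s).
Proof. by split; rewrite ?size_mkseq ?div0n ?addn0 ?sumn_init. Qed.

(** At time l*p, p = k-s+1, color k+1 has just been created: M_k is known and
    M_{k+1} = M_k + 1 is the total number of balls. *)
Lemma state_at_lp (hl : (1 <= l)%N) k st :
  (s <= k)%N -> urn_inv (l * (k - s + 1)) st ->
  [/\ (k < size st)%N, Mk k st = (m s + l * (k - s + 1) + (k - s))%N
    & Mk k.+1 st = (Mk k st).+1 /\ sumn st = Mk k.+1 st].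
Proof.
move=> hk [hsize hsum hlast]; rewrite mulKn // in hsize hsum.
have [st' Est] : exists st', st = rcons st' 1%N.
  by apply: hlast; [rewrite muln_gt0 hl addn1 | exact: dvdn_mulr].
subst st; rewrite size_rcons in hsize; rewrite sumn_rcons in hsum.
have hst' : size st' = k by lia.
rewrite Mk_rcons ?hst' // /Mk take_oversize ?hst' //.
rewrite take_oversize ?size_rcons ?hst' // sumn_rcons.
by split; rewrite ?addn1 //; lia.
Qed.

Lemma urnP_restart (hl : (1 <= l)%N) (hs : (1 <= s)%N) (hm : init_increasing)
    T r f (h : seq nat -> rat) :
  (forall st, urn_inv T st -> urnE l T r st f = h st) ->
  urnE l 0 (T + r) (urn_init m s) f = urnE l 0 T (urn_init m s) h.
Proof.
move=> H; rewrite urnE_split add0n.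
apply: (@urnE_eq_inv l urn_inv (urn_inv_next hl)); first exact: urn_inv_init.
by move=> st; rewrite add0n; exact: H.
Qed.

End InitialUrn.

Theorem lemma3p1 (l s : nat) (m : nat -> nat)
  (hl : (1 <= l)%N) (hs : (1 <= s)%N)
  (hm1 : (1 <= m 1%N)%N)
  (hm : forall k : nat, (1 <= k)%N -> (k < s)%N -> (m k < m k.+1)%N) :
  (* unconditional law for k >= s *)
  (forall k n : nat, (s <= k)%N -> (l * (k - s + 1) <= n)%N ->
     forall a : nat,
       urnP l m s n (fun st => Mk k st == a)
       = pimm l 1 (m s + l * (k - s + 1) + (k - s)) (n - l * (k - s + 1)) a)
  /\
  (* conditional law given M_{k+1}(n), case 1 <= k < s *)
  (forall k n : nat, (1 <= k)%N -> (k < s)%N ->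
     forall a b : nat,
       urnP l m s n (fun st => (Mk k st == a) && (Mk k.+1 st == b))
       = urnP l m s n (fun st => Mk k.+1 st == b)
         * pclas (m k.+1 - m k) (m k) (b - m k.+1) a)
  /\
  (* conditional law given M_{k+1}(n), case k >= s and n >= l p *)
  (forall k n : nat, (s <= k)%N -> (l * (k - s + 1) <= n)%N ->
     forall a b : nat,
       urnP l m s n (fun st => (Mk k st == a) && (Mk k.+1 st == b))
       = urnP l m s n (fun st => Mk k.+1 st == b)
         * pclas 1 (m s + l * (k - s + 1) + (k - s))
                 (b - m s - (l + 1) * (k - s + 1)) a).
Proof.
split; [|split].
- move=> k n hk hn a; rewrite /urnP -{1}(subnKC hn).
  set W := (m s + _ + _)%N; set N := (n - _)%N.
  rewrite (urnP_restart hl hs hm _ _ _ (fun _ => pimm l 1 W N a)); last first.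
    move=> st /(state_at_lp hl k st hk) [hk' hW [hC hS]].
    rewrite urnE_marginal 1?ltnW // hS hC subSnn hW.
    by rewrite imm_urn_shift_mul /pimm pimm_aux_imm_urn.
  by rewrite urnE_const // sumn_init // (m_pos hm1 hm s hs (leqnn s)).
- move=> k n hk1 hks a b; rewrite /urnP urnE_cond ?size_mkseq //.
  by rewrite (Mk_init hm k hk1 (ltnW hks)) (Mk_init hm k.+1 (ltn0Sn k) hks).
- move=> k n hk hn a b; rewrite /urnP -(subnKC hn).
  set T := (l * _)%N; set N := (n - _)%N; set c := pclas _ _ _ _.
  rewrite (urnP_restart hl hs hm _ _ _
             (fun st => urnE l T N st (fun x => (Mk k.+1 x == b)%:R) * c)); last first.
    move=> st /(state_at_lp hl k st hk) [hk' hW [hC hS]].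
    by rewrite urnE_cond // hC subSnn hW /c; congr (_ * pclas _ _ _ _); lia.
  by rewrite urnE_mulr [in RHS]urnE_split add0n.
Qed.
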